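(* Let $t\ge 3$ be an integer, let $G$ be a graph not containing $K_{3,t}$ as a subgraph, let $D$ be a minimum dominating set of $G$ with $\gamma=|D|$, and let $\nabla$ be an integer with $\nabla>\nabla_1^B(G)$. Define $D_1=\{v\in V(G):$ for all $A\subseteq V(G)\setminus\{v\}$ with $N(v)\subseteq N[A]$ we have $|A|>2\nabla-1\}$, $R_1=V(G)\setminus N[D_1]$, $N_{R_1}(v)=N(v)\cap R_1$, $B_v=\{z\in V(G)\setminus\{v\}: |N_{R_1}(v)\cap N_{R_1}(z)|\ge(2\nabla-1)t+1\}$ for $v\in V(G)$, $W=\{v\in V(G): B_v\neq\emptyset\}$, and $D_2=\bigcup_{v\in W}(\{v\}\cup B_v)$. Let $\eta\in[0,1]$ be such that $|(D_1\cup D_2)\cap D|=\eta\gamma$. Then $|D_1\cup D_2|<\rho(G)\gamma+2\nabla\eta\gamma$.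
   Context: Graphs are finite, undirected and simple. $N(v)$ is the open neighbourhood of $v$, $N[v]=N(v)\cup\{v\}$, $N[A]=\bigcup_{a\in A}N[a]$. A dominating set is a set $D$ with $N[D]=V(G)$. A $1$-shallow minor of $G$ is a graph obtained from $G$ by deleting vertices and edges and contracting pairwise vertex-disjoint connected subgraphs of radius at most $1$; $\nabla_1^B(G)$ is the maximum edge density $|E(H)|/|V(H)|$ of a bipartite $1$-shallow minor $H$ of $G$. The Hall ratio $\rho(G)$ is $\max\{|V(H)|/\alpha(H): H\subseteq G\}$ with $\alpha(H)$ the independence number. $K_{3,t}$ is the complete bipartite graph with parts of sizes $3$ and $t$. *)

From mathcomp Require Import all_boot all_order all_algebra.
Set Implicit Arguments. Unset Strict Implicit. Unset Printing Implicit Defensive.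
Import Order.TTheory GRing.Theory Num.Theory.

Section Graph.
Variables (T : finType) (e : rel T).

Definition simple_graph : Prop := symmetric e /\ irreflexive e.

Definition nbhd (v : T) : {set T} := [set u | e v u].
Definition cnbhd (v : T) : {set T} := v |: nbhd v.
Definition cnbhdS (A : {set T}) : {set T} := \bigcup_(a in A) cnbhd a.

Definition dominating (D : {set T}) : bool := cnbhdS D == setT.
Definition min_dominating (D : {set T}) : Prop :=
  dominating D /\ forall D' : {set T}, dominating D' -> #|D| <= #|D'|.

Definition has_K3t (t : nat) : Prop :=
  exists A B : {set T}, [/\ #|A| = 3, #|B| = t, [disjoint A & B] &
    forall a b, a \in A -> b \in B -> e a b].

(* subgraphs H of G: a vertex set S and an edge set F (pairs) of edges of G inside S *)
Definition is_subgraph (S : {set T}) (F : {set T * T}) : bool :=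
  [forall p in F, [&& e p.1 p.2, p.1 \in S & p.2 \in S]].
Definition indep_in (F : {set T * T}) (I : {set T}) : bool :=
  [forall x in I, forall y in I, (x, y) \notin F].
Definition alpha_sub (S : {set T}) (F : {set T * T}) : nat :=
  \max_(I : {set T} | (I \subset S) && indep_in F I) #|I|.
Definition hall_ratio : rat :=
  \big[Num.max/0%R]_(p : {set T} * {set (T * T)} |
        is_subgraph p.1 p.2 && (p.1 != set0))
     ((#|p.1|%:R : rat) / (alpha_sub p.1 p.2)%:R)%R.

(* "nab > nabla_1^B(G)": every bipartite 1-shallow minor H of G (with at least one
   vertex) has edge density |E(H)|/|V(H)| < nab.  A 1-shallow minor with vertex set
   'I_k is given by pairwise disjoint branch sets X i, each inducing a connected
   subgraph of radius <= 1 (centre c i, X i within N[c i]); an edge ij of H requires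
   an edge of G between X i and X j.  Bipartiteness: sides given by s; edges of H are
   stored as pairs (i, j) oriented from side false to side true. *)
Definition nabla1B_lt (nab : rat) : Prop :=
  forall (k : nat) (X : 'I_k -> {set T}) (c : 'I_k -> T) (s : 'I_k -> bool)
         (E : {set 'I_k * 'I_k}),
    0 < k ->
    (forall i, c i \in X i) ->
    (forall i, X i \subset cnbhd (c i)) ->
    (forall i j, i != j -> [disjoint X i & X j]) ->
    (forall p, p \in E -> [&& ~~ s p.1, s p.2 &
                              [exists x in X p.1, exists y in X p.2, e x y]]) ->
    ((#|E|%:R : rat) / k%:R < nab)%R.

Section Sets.
Variables (nab : int) (t : nat).

Definition D1 : {set T} :=
  [set v | [forall A : {set T}, ((v \notin A) && (nbhd v \subset cnbhdS A)) ==>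
                                 ((#|A|%:Z) > 2 * nab - 1)%R]].
Definition R1 : {set T} := ~: cnbhdS D1.
Definition nbhdR1 (v : T) : {set T} := nbhd v :&: R1.
Definition Bv (v : T) : {set T} :=
  [set z | (z != v) &&
     ((2 * nab - 1) * t%:Z + 1 <= #|nbhdR1 v :&: nbhdR1 z|%:Z)%R].
Definition W : {set T} := [set v | Bv v != set0].
Definition D2 : {set T} := \bigcup_(v in W) (v |: Bv v).
End Sets.
End Graph.

(* Let X = D1 ∪ D2.  Because G has no K_{3,t}, a set A with |A| ≤ 2∇-1 that
   dominates the common R1-neighbours of y and some z ∈ B_y must contain y or
   z: otherwise some a ∈ A dominates t of them, and together with {y, z, a}
   they span a K_{3,t}.  Hence |B_y| < 2∇ (if B_y ≠ ∅ then y has a neighbour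
   in R1, so y ∉ D1, and the small set witnessing this contains B_y), and a
   vertex x that is in D1 or has a B-partner outside D is heavy: every A ⊆ D
   with N(x) ⊆ N[A] has |A| ≥ 2∇.
   Removing from X each y ∈ X ∩ D together with B_y costs at most
   2∇|X ∩ D| = 2∇ηγ vertices and leaves heavy vertices outside D.  For an
   independent set I of them, contracting each d ∈ D with the vertices outside
   I that it dominates gives a bipartite 1-shallow minor with |I| + γ vertices
   and at least 2∇|I| edges, so 2∇|I| < ∇(|I| + γ), i.e. |I| < γ.  Hence what
   remains has at most ρ(G)α < ρ(G)γ vertices. *)

From mathcomp Require Import all_boot all_order all_algebra.
From mathcomp Require Import zify.
Set Implicit Arguments. Unset Strict Implicit. Unset Printing Implicit Defensive.
Import Order.TTheory GRing.Theory Num.Theory.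

Lemma card_bigcup_le (T I : finType) (P : pred I) (F : I -> {set T}) :
  #|\bigcup_(i | P i) F i| <= \sum_(i | P i) #|F i|.
Proof.
elim/big_rec2: _ => [|i n U _ leUn]; first by rewrite cards0.
by rewrite (leq_trans (leq_card_setU _ _).1) ?leq_add2l.
Qed.

Lemma subset_card_eq (T : finType) (S : {set T}) (n : nat) :
  n <= #|S| -> exists2 B : {set T}, B \subset S & #|B| = n.
Proof.
move=> le_nS; exists [set x in take n (enum S)].
  by apply/subsetP => x; rewrite inE => /mem_take; rewrite mem_enum.
by rewrite cardsE (card_uniqP (take_uniq _ (enum_uniq _))) size_takel -?cardE.
Qed.

Section Neighbourhoods.
Variables (T : finType) (e : rel T).
Implicit Types (A C D S : {set T}) (a c p q v y : T).

Lemma mem_cnbhdS A a c : a \in A -> c \in cnbhd e a -> c \in cnbhdS e A.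
Proof. by move=> aA ca; apply/bigcupP; exists a. Qed.

Lemma cnbhd_refl v : v \in cnbhd e v.
Proof. exact: setU11. Qed.

Definition dominator A y : T :=
  if y \in A then y else odflt y [pick a in A | y \in cnbhd e a].

Lemma dominatorP A y :
  y \in cnbhdS e A -> dominator A y \in A /\ y \in cnbhd e (dominator A y).
Proof.
rewrite /dominator; case: ifP => [yA _|_ /bigcupP [a aA ya]].
  by rewrite yA cnbhd_refl.
by case: pickP => [a' /andP [] //|/(_ a)]; rewrite aA ya.
Qed.

Lemma dominator_id A y : y \in A -> dominator A y = y.
Proof. by rewrite /dominator => ->. Qed.

Lemma dominating_dominatorP D y : dominating e D ->
  dominator D y \in D /\ y \in cnbhd e (dominator D y).
Proof. by move=> /eqP domD; apply: dominatorP; rewrite domD inE. Qed.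

Lemma cover_pigeonhole A C t :
  C \subset cnbhdS e A -> #|A| * t < #|C| ->
  exists2 a, a \in A & t < #|C :&: cnbhd e a|.
Proof.
move=> CA ltC; apply/exists_inP; apply: contraLR ltC.
rewrite negb_exists_in -leqNgt => /forall_inP small.
have -> : C = \bigcup_(a in A) (C :&: cnbhd e a).
  by rewrite -big_distrr /=; apply/esym/setIidPl.
rewrite -sum_nat_const; apply: leq_trans (card_bigcup_le _ _) _.
by apply: leq_sum => a aA; rewrite leqNgt small.
Qed.

Hypothesis irr : irreflexive e.

Lemma has_K3t_common_nbhd t p q a S :
  p != q -> a != p -> a != q ->
  S \subset nbhd e p :&: nbhd e q :&: cnbhd e a -> t < #|S| -> has_K3t e t.
Proof.
move=> pq ap aq Spqa ltS.
have [B BS cardB] : exists2 B : {set T}, B \subset S :\ a & #|B| = t.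
  apply: subset_card_eq; move: ltS.
  by rewrite (cardsD1 a S); case: (a \in S) => /=; lia.
have adjB b : b \in B -> [/\ e p b, e q b & e a b].
  move=> /(subsetP BS); rewrite !inE => /andP [ba /(subsetP Spqa)].
  by rewrite !inE (negPf ba) => /andP [/andP [-> ->]].
exists [set p; q; a], B; split => //.
- rewrite -setUA !cardsU1 cards1 !inE.
  by rewrite (negPf pq) eq_sym (negPf ap) eq_sym (negPf aq).
- rewrite disjoint_sym disjoints_subset; apply/subsetP => b /adjB [pb qb ab].
  rewrite !inE; apply/negP => /orP [/orP [] | ] /eqP eb; subst b;
    by move: pb qb ab; rewrite irr.
- by move=> x b; rewrite !inE => /orP [/orP [] | ] /eqP -> /adjB [].
Qed.

Lemma mem_cover_common_nbhd t p q A C : ~ has_K3t e t -> p != q ->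
  C \subset nbhd e p :&: nbhd e q -> C \subset cnbhdS e A -> #|A| * t < #|C| ->
  (p \in A) || (q \in A).
Proof.
move=> noK pq Cpq CA ltC; have [a aA lta] := cover_pigeonhole CA ltC.
have [<- | ap] := eqVneq a p; first by rewrite aA.
have [<- | aq] := eqVneq a q; first by rewrite aA orbT.
case: noK; apply: (has_K3t_common_nbhd pq ap aq _ lta).
by rewrite setSI.
Qed.

End Neighbourhoods.

Section ShallowMinors.
Variables (T : finType) (e : rel T) (nab : rat).
Hypothesis nab_gt : nabla1B_lt e nab.

Lemma nabla1B_lt_centred (V : {set T}) (X : T -> {set T}) (s : T -> bool)
    (E : {set T * T}) :
  0 < #|V| ->
  {in V, forall v, v \in X v} ->
  {in V, forall v, X v \subset cnbhd e v} ->
  {in V &, forall u v, u != v -> [disjoint X u & X v]} ->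
  (forall p, p \in E -> [&& p.1 \in V, p.2 \in V, ~~ s p.1, s p.2 &
                            [exists x in X p.1, exists y in X p.2, e x y]]) ->
  (#|E|%:R / #|V|%:R < nab)%R.
Proof.
move=> V_gt0 XvP XvN Xdisj EP; have [v0 v0V] := card_gt0P V_gt0.
pose rk := enum_rank_in v0V; have rkK := enum_rankK_in v0V.
have rk_inj : {in V &, injective rk} := can_in_inj rkK.
pose Erk := [set (rk p.1, rk p.2) | p in E].
have -> : #|E| = #|Erk|.
  apply/esym/card_in_imset => -[p1 p2] [q1 q2].
  move=> /EP/and3P [/= p1V p2V _] /EP/and3P [/= q1V q2V _] [].
  by move=> /(rk_inj _ _ p1V q1V) -> /(rk_inj _ _ p2V q2V) ->.
pose vl : 'I_#|V| -> T := enum_val.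
apply: (@nab_gt _ (fun i => X (vl i)) vl (fun i => s (vl i)) Erk) => //.
- by move=> i; apply: XvP; apply: enum_valP.
- by move=> i; apply: XvN; apply: enum_valP.
- move=> i j ij; apply: Xdisj; rewrite ?enum_valP //.
  by apply: contra ij => /eqP/enum_val_inj ->.
- move=> _ /imsetP [p /EP/and5P [p1 p2 sp1 sp2 adj] ->] /=.
  by rewrite /vl !rkK // sp1 sp2.
Qed.

Lemma nabla1B_lt_gt0 : 0 < #|T| -> (0 < nab)%R.
Proof.
move=> /card_gt0P [x _].
have := @nabla1B_lt_centred [set x] (fun v => [set v]) (fun _ => false) set0.
rewrite cards0 mul0r; apply => [|v _|v _|u v|p].
- by rewrite cards1.
- exact: set11.
- by rewrite sub1set cnbhd_refl.
- by rewrite !inE => /eqP -> /eqP ->; rewrite eqxx.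
- by rewrite in_set0.
Qed.

Lemma sum_card_dominator_nbhd_lt (D I : {set T}) :
  dominating e D -> 0 < #|D| -> [disjoint I & D] ->
  {in I &, forall x y, ~~ e x y} ->
  ((\sum_(i in I) #|dominator e D @: nbhd e i|)%:R < nab * (#|I| + #|D|)%:R)%R.
Proof.
move=> domD D_gt0 IDdisj Iindep; have domP y := dominating_dominatorP y domD.
(* [branch y] is the centre of the branch set containing y. *)
pose branch y := if y \in I then y else dominator e D y.
pose E := [set p : T * T | (p.1 \in I) && (p.2 \in dominator e D @: nbhd e p.1)].
have cardE : #|E| = \sum_(i in I) #|dominator e D @: nbhd e i|.
  rewrite -sum1dep_card -(pair_big_dep (mem I)
    (fun i => mem (dominator e D @: nbhd e i)) (fun _ _ => 1)).
  by apply: eq_bigr => i _; rewrite sum1_card.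
have cardV : #|I :|: D| = #|I| + #|D|.
  by rewrite cardsU (disjoint_setI0 IDdisj) cards0 subn0.
have V_gt0 : 0 < #|I :|: D| by rewrite cardV addn_gt0 D_gt0 orbT.
rewrite -cardE -cardV -ltr_pdivrMr ?ltr0n //.
apply: (@nabla1B_lt_centred (I :|: D) (fun v => [set y | branch y == v])
                             (fun v => v \in D)) => //.
- move=> v; rewrite !inE /branch => /orP [vI|vD]; first by rewrite vI.
  by rewrite (disjointFl IDdisj vD) dominator_id.
- move=> v _; apply/subsetP => y; rewrite inE /branch.
  by case: ifP => _ /eqP <-; [apply: cnbhd_refl | case: (domP y)].
- move=> u v _ _ uv; rewrite -setI_eq0; apply/eqP/setP => y.
  by rewrite !inE; apply/negP => /andP [/eqP -> /eqP uv']; rewrite uv' eqxx in uv.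
- move=> [i d]; rewrite inE /= => /andP [iI /imsetP [y iy ->]].
  have [yD _] := domP y.
  rewrite !inE iI yD (disjointFr IDdisj iI) orbT /=.
  apply/exists_inP; exists i; first by rewrite inE /branch iI.
  apply/exists_inP; exists y; last by rewrite inE in iy.
  have yI : y \notin I by apply: contraTN iy => yI; rewrite inE Iindep.
  by rewrite inE /branch (negPf yI).
Qed.

End ShallowMinors.

Lemma card_independent_lt (T : finType) (e : rel T) (m : nat) (D I : {set T}) :
  nabla1B_lt e m%:R -> dominating e D -> 0 < #|D| -> [disjoint I & D] ->
  {in I &, forall x y, ~~ e x y} ->
  {in I, forall i (A : {set T}),
     A \subset D -> nbhd e i \subset cnbhdS e A -> 2 * m <= #|A|} ->
  #|I| < #|D|.
Proof.
move=> nab_gt domD D_gt0 IDdisj Iindep heavy.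
have := sum_card_dominator_nbhd_lt nab_gt domD D_gt0 IDdisj Iindep.
rewrite -natrM ltr_nat => lt_sum.
have : #|I| * (2 * m) <= \sum_(i in I) #|dominator e D @: nbhd e i|.
  rewrite -sum_nat_const; apply: leq_sum => i iI; apply: (heavy i iI).
    by apply/subsetP => _ /imsetP [y _ ->]; case: (dominating_dominatorP y domD).
  apply/subsetP => y iy; apply: (mem_cnbhdS (imset_f _ iy)).
  by case: (dominating_dominatorP y domD).
nia.
Qed.

Section HallRatio.
Variables (T : finType) (e : rel T).
Hypothesis irr : irreflexive e.
Implicit Types (S I : {set T}) (F : {set T * T}).

Definition induced (S : {set T}) : {set T * T} :=
  [set p | [&& e p.1 p.2, p.1 \in S & p.2 \in S]].

Lemma induced_subgraph S : is_subgraph e S (induced S).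
Proof. by apply/forall_inP => p; rewrite inE. Qed.

Lemma alpha_induced_lt S n :
  (forall I, I \subset S -> {in I &, forall x y, ~~ e x y} -> #|I| < n) ->
  alpha_sub S (induced S) < n.
Proof.
move=> small; have n_gt0 : 0 < n by apply: leq_ltn_trans (small set0 _ _) => //;
  [exact: sub0set | by move=> x; rewrite inE].
rewrite -(prednK n_gt0) ltnS; apply/bigmax_leqP => I /andP [IS indI].
rewrite -ltnS prednK //; apply: small => // x y xI yI; apply/negP => xy.
by move: indI => /forall_inP /(_ x xI) /forall_inP /(_ y yI);
   rewrite inE xy (subsetP IS x xI) (subsetP IS y yI).
Qed.

Lemma alpha_sub_gt0 S F x : is_subgraph e S F -> x \in S -> 0 < alpha_sub S F.
Proof.
move=> SF xS; apply: (@leq_trans #|[set x]|); first by rewrite cards1.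
apply: (@leq_bigmax_cond _ _ (fun I : {set T} => #|I|) [set x]).
rewrite sub1set xS; apply/forall_inP => a /set1P ->; apply/forall_inP => b /set1P ->.
by apply/negP => /(forall_inP SF) /=; rewrite irr.
Qed.

Lemma hall_ratio_ge0 : (0 <= hall_ratio e)%R.
Proof. exact: bigmax_ge_id. Qed.

Lemma card_le_hall_ratio S F :
  is_subgraph e S F -> (#|S|%:R <= hall_ratio e * (alpha_sub S F)%:R)%R.
Proof.
move=> SF; have [-> | [x xS]] := set_0Vmem S.
  by rewrite cards0 mulr_ge0 ?hall_ratio_ge0.
rewrite -ler_pdivrMr ?ltr0n ?(alpha_sub_gt0 SF xS) //.
apply: (le_bigmax_cond 0%R (j := (S, F))
  (fun p : {set T} * {set T * T} => #|p.1|%:R / (alpha_sub p.1 p.2)%:R)%R).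
by rewrite /= SF; apply/set0Pn; exists x.
Qed.

Lemma hall_ratio_gt0 : 0 < #|T| -> (0 < hall_ratio e)%R.
Proof.
move=> /card_gt0P [x _].
have SF : is_subgraph e [set x] set0 by apply/forall_inP => p; rewrite in_set0.
rewrite lt_def hall_ratio_ge0 andbT; have := card_le_hall_ratio SF.
by rewrite cards1; apply: contraTneq => ->; rewrite mul0r ler10.
Qed.

End HallRatio.

Section DominationSets.
Variables (T : finType) (e : rel T).
Implicit Types (A D : {set T}) (i v x y z : T).

Lemma Bv_sym (nab : int) t v z : (z \in Bv e nab t v) = (v \in Bv e nab t z).
Proof. by rewrite !inE eq_sym setIC. Qed.

Lemma D2_W (nab : int) t : D2 e nab t = W e nab t.
Proof.
apply/setP => x; apply/bigcupP/idP => [[v vW /setU1P [-> // | xBv]] | xW].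
  by rewrite inE; apply/set0Pn; exists v; rewrite Bv_sym.
by exists x; rewrite ?setU11.
Qed.

Variables (m t : nat).

Lemma D1P v : reflect
  (forall A, v \notin A -> nbhd e v \subset cnbhdS e A -> 2 * m <= #|A|)
  (v \in D1 e m).
Proof.
rewrite inE; apply: (iffP forallP) => [D1v A vA vAN | D1v A].
  by have := D1v A; rewrite vA vAN /=; lia.
by apply/implyP => /andP [vA vAN]; have := D1v A vA vAN; lia.
Qed.

Hypothesis m_gt0 : 0 < m.

Lemma in_Bv v z : (z \in Bv e m t v) =
  (z != v) && ((2 * m - 1) * t < #|nbhdR1 e m v :&: nbhdR1 e m z|).
Proof. rewrite inE; congr andb; lia. Qed.

Hypotheses (irr : irreflexive e) (noK : ~ has_K3t e t).

Lemma nbhd_cover_large i A : i \notin A -> nbhd e i \subset cnbhdS e A ->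
  i \in D1 e m \/ (exists2 z, z \in Bv e m t i & z \notin A) -> 2 * m <= #|A|.
Proof.
move=> iA iAN [/D1P D1i | [z]]; first exact: D1i.
rewrite in_Bv => /andP [zi ltC] zA.
rewrite leqNgt; apply/negP => ltA.
have CiA : nbhdR1 e m i :&: nbhdR1 e m z \subset cnbhdS e A.
  by apply: subset_trans iAN; rewrite -setIA subsetIl.
have Czi : nbhdR1 e m i :&: nbhdR1 e m z \subset nbhd e z :&: nbhd e i.
  by rewrite setIC setISS ?subsetIl.
have ltAC : #|A| * t < #|nbhdR1 e m i :&: nbhdR1 e m z|.
  by apply: leq_ltn_trans ltC; rewrite leq_mul2r; apply/orP; right; lia.
have := mem_cover_common_nbhd irr noK zi Czi CiA ltAC.
by rewrite (negPf zA) (negPf iA).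
Qed.

Lemma Bv_notin_D1 x y : x \in Bv e m t y -> y \notin D1 e m.
Proof.
rewrite in_Bv => /andP [_ /(leq_ltn_trans (leq0n _))].
rewrite card_gt0 => /set0Pn [c /setIP [/setIP [yc]]].
rewrite in_setC => /negP cD1 _; apply/negP => yD1.
exact: cD1 (mem_cnbhdS yD1 (setU1r y yc)).
Qed.

Lemma card_Bv_lt y : #|Bv e m t y| < 2 * m.
Proof.
have [-> | [x xB]] := set_0Vmem (Bv e m t y); first by rewrite cards0 muln_gt0.
move: (Bv_notin_D1 xB); rewrite inE negb_forall => /existsP [A].
rewrite negb_imply => /andP [/andP [yA yAN] ltA].
apply: (@leq_ltn_trans #|A|); last by move: ltA; lia.
apply/subset_leq_card/subsetP => z zB; apply: contraLR ltA => zA.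
have := nbhd_cover_large yA yAN (or_intror (ex_intro2 _ _ z zB zA)).
by rewrite negbK; lia.
Qed.

Definition unpaired D : {set T} :=
  (D1 e m :|: D2 e m t) :\:
    \bigcup_(y in (D1 e m :|: D2 e m t) :&: D) (y |: Bv e m t y).

Lemma card_D1_D2_le D :
  #|D1 e m :|: D2 e m t| <=
    #|unpaired D| + 2 * m * #|(D1 e m :|: D2 e m t) :&: D|.
Proof.
set X := D1 e m :|: D2 e m t.
have XP : X \subset unpaired D :|: \bigcup_(y in X :&: D) (y |: Bv e m t y).
  by apply/subsetP => x xX; rewrite in_setU in_setD xX andbT orNb.
apply: leq_trans (subset_leq_card XP) _.
apply: leq_trans (leq_card_setU _ _).1 _; rewrite leq_add2l mulnC -sum_nat_const.
apply: leq_trans (card_bigcup_le _ _) _; apply: leq_sum => y _.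
by rewrite cardsU1; have := card_Bv_lt y; case: (y \notin _) => /=; lia.
Qed.

Lemma unpairedP D x : x \in unpaired D ->
  x \notin D /\ (x \in D1 e m \/ exists2 z, z \in Bv e m t x & z \notin D).
Proof.
set X := D1 e m :|: D2 e m t.
have XE y : (y \in X) = (y \in D1 e m) || (Bv e m t y != set0).
  by rewrite /X in_setU D2_W [y \in W _ _ _]inE.
rewrite inE => /andP [xP xX].
have paired y : y \in X -> y \in D -> x \notin y |: Bv e m t y.
  move=> yX yD; apply: contra xP => xy.
  by apply/bigcupP; exists y; rewrite // inE yX.
split; first by apply/negP => xD; have := paired x xX xD; rewrite setU11.
move: xX; rewrite XE => /orP [-> | /set0Pn [z zB]]; [by left | right].
exists z => //; apply/negP => zD.
have zX : z \in X.
  by rewrite XE; apply/orP; right; apply/set0Pn; exists x; rewrite Bv_sym.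
by have := paired z zX zD; rewrite setU1r // Bv_sym.
Qed.

Lemma alpha_unpaired_lt D : nabla1B_lt e m%:R -> dominating e D -> 0 < #|D| ->
  alpha_sub (unpaired D) (induced e (unpaired D)) < #|D|.
Proof.
move=> nab_gt domD D_gt0; apply: alpha_induced_lt => I IU Iindep.
have unpI x (xI : x \in I) := unpairedP (subsetP IU x xI).
apply: card_independent_lt nab_gt domD D_gt0 _ Iindep _.
  by rewrite disjoint_subset; apply/subsetP => x /unpI [xD _]; rewrite inE.
move=> i iI A AD iAN; have [iD heavy] := unpI i iI.
apply: (nbhd_cover_large (contra (subsetP AD i) iD) iAN).
case: heavy => [D1i | [z zB zD]]; [by left | right].
by exists z => //; apply: contra (subsetP AD z) zD.
Qed.

End DominationSets.

Local Open Scope ring_scope.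

Theorem lemma34 (T : finType) (e : rel T) (t : nat) (D : {set T}) (nab : int)
  (eta : rat) :
  simple_graph e -> (0 < #|T|)%N -> (3 <= t)%N ->
  ~ has_K3t e t ->
  min_dominating e D ->
  nabla1B_lt e (nab%:~R) ->
  0 <= eta <= 1 ->
  (#|(D1 e nab :|: D2 e nab t) :&: D|%:R : rat) = eta * #|D|%:R ->
  (#|D1 e nab :|: D2 e nab t|%:R : rat) <
    hall_ratio e * #|D|%:R + 2 * nab%:~R * eta * #|D|%:R.
Proof.
move=> [_ irr] T_gt0 _ noK [domD _] nab_gt _ eta_def.
have := nabla1B_lt_gt0 nab_gt T_gt0; rewrite ltr0z.
case: nab nab_gt eta_def => // m nab_gt eta_def m_gt0.
have D_gt0 : (0 < #|D|)%N.
  have [x _] := card_gt0P T_gt0; have [xD _] := dominating_dominatorP x domD.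
  by apply/card_gt0P; exists (dominator e D x).
have unp_lt : #|unpaired e m t D|%:R < hall_ratio e * #|D|%:R.
  apply: le_lt_trans (card_le_hall_ratio irr (induced_subgraph e _)) _.
  by rewrite ltr_pM2l ?hall_ratio_gt0 // ltr_nat
     (alpha_unpaired_lt m_gt0 irr noK nab_gt domD D_gt0).
rewrite -mulrA -eta_def -[m%:~R]/(m%:R : rat) -!natrM.
apply: (le_lt_trans (y := #|unpaired e m t D|%:R +
                          (2 * m * #|(D1 e m :|: D2 e m t) :&: D|)%:R)).
  by rewrite -natrD ler_nat card_D1_D2_le.
by rewrite ltrD2r.
Qed.
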